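(* Let $A$ be an absolutely simple abelian variety over a number field with complex multiplication by the CM type $(E,S)$, with reflex field $E^*$ and reflex norm $\Phi_{(E,S)}:T_{E^*}\to\operatorname{MT}(A)$. Let $C$ be the group of multiplicative type defined by the exact sequence $1\to C\to T_{E^*}\xrightarrow{\Phi_{(E,S)}}\operatorname{MT}(A)\to1$, and let $\hat C$ be its character group. If $\operatorname{MT}(A)$ has rank $r$, then the torsion subgroup of $\hat C$ has order at most $\left\lfloor 2^{-r}(r+1)^{(r+1)/2}\right\rfloor$.
   Context: With $\tilde E$ the Galois closure of $E$, $G=\operatorname{Gal}(\tilde E/\mathbb Q)$, $H=\operatorname{Gal}(\tilde E/E)$, $\operatorname{Hom}(E,\overline{\mathbb Q})=H\backslash G$, $S\subseteq H\backslash G$ the CM type (the embeddings through which $E$ acts on the tangent space at the origin), $\tilde S$ its preimage in $G$, $H'=\{g:\tilde Sg=\tilde S\}$: the reflex field $E^*$ is the fixed field of $H'$ and $R$ is the image of $\{s^{-1}:s\in\tilde S\}$ in $H'\backslash G$. For a number field $F$, $T_F=\operatorname{Res}_{F/\mathbb Q}\mathbb G_m$ with character group free on $\operatorname{Hom}(F,\overline{\mathbb Q})$. The reflex norm $\Phi_{(E,S)}:T_{E^*}\to T_E$ is given on characters by $[g]\mapsto\sum_{r\in R}[rg]$, and the Mumford–Tate torus $\operatorname{MT}(A)$ is its image. *)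

From HB Require Import structures.
From mathcomp Require Import all_boot all_order all_algebra all_fingroup all_field.
Set Implicit Arguments. Unset Strict Implicit. Unset Printing Implicit Defensive.
Import Order.TTheory GRing.Theory Num.Theory.

(** * Group-theoretic CM-type data (conventions of the paper).
    Right actions: (g * h) x = h (g x), so H\G = right cosets H :* g,
    the coset H :* g corresponding to the embedding x |-> g x of E. *)

Section GroupData.
Variable gT : finGroupType.
Local Open Scope group_scope.

Definition cm_preimage (S : {set {set gT}}) : {set gT} := \bigcup_(c in S) c.

Definition reflex_stab (G : {set gT}) (S : {set {set gT}}) : {set gT} :=
  [set g in G | cm_preimage S :* g == cm_preimage S].

(** R g : the set { r g : r in R } subset of H'\G, where R is the image of
    { s^-1 : s in S~ } in H'\G, and g is (a representative of) the coset c. *)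
Definition reflex_translate (G : {set gT}) (S : {set {set gT}}) (c : {set gT})
  : {set {set gT}} :=
  [set reflex_stab G S :* ((s^-1) * repr c) | s in cm_preimage S].

Definition is_CM_type (G H : {set gT}) (iota : gT) (S : {set {set gT}}) :=
  S \subset rcosets H G /\
  forall c, c \in rcosets H G -> ((c \in S) = ((c :* iota) \notin S)).

Definition primitive_CM_type (G H : {set gT}) (S : {set {set gT}}) :=
  [set g in G | g *: cm_preimage S == cm_preimage S] = H.

End GroupData.

Local Open Scope ring_scope.

(** Matrix of the reflex norm on character groups
    Phi^* : X(T_E) = Z^{H\G} -> X(T_{E*}) = Z^{H'\G},  [Hg] |-> sum_{r in R} [r g],
    acting on row vectors: rows indexed by H\G, columns by H'\G. *)
Definition reflex_norm_mx (gT : finGroupType) (G H : {set gT}) (S : {set {set gT}})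
  : 'M[int]_(#|rcosets H G|, #|rcosets (reflex_stab G S) G|) :=
  \matrix_(i, j) ((enum_val j \in reflex_translate G S (enum_val i)) : nat)%:Z.

(** Membership in the image Lambda = Phi^*(X(T_E)) (= X(MT(A)) inside X(T_{E*})). *)
Definition in_image (m n : nat) (M : 'M[int]_(m, n)) (y : 'rV[int]_n) : Prop :=
  exists u : 'rV[int]_m, y = u *m M.

(** y mod Lambda is a torsion element of the cokernel C^ = Z^n / Lambda. *)
Definition coker_torsion (m n : nat) (M : 'M[int]_(m, n)) (y : 'rV[int]_n) : Prop :=
  exists k : nat, (0 < k)%N /\ in_image M (k%:Z *: y).

Definition coker_torsion_order_le (m n : nat) (M : 'M[int]_(m, n)) (N : int) : Prop :=
  forall xs : seq 'rV[int]_n,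
    (forall x, x \in xs -> coker_torsion M x) ->
    (forall i j, (i < j < size xs)%N ->
        ~ in_image M (nth 0 xs i - nth 0 xs j)) ->
    ((size xs)%:Z <= N)%R.

Definition int_rank (m n : nat) (M : 'M[int]_(m, n)) : nat :=
  \rank (map_mx (fun z : int => z%:~R : rat) M).

Definition torsion_bound (r : nat) : int :=
  Num.floor ((2%:R : algC) ^- r * (sqrtC (r.+1)%:R) ^+ r.+1).

(** * Number-field side. L : a finite Galois extension of Q (a number field),
    tau : L -> algC a fixed embedding (L viewed inside Qbar). *)

(** F is totally real: every embedding F -> Qbar (all are of the form
    x |-> tau (sigma x), sigma in Gal(L/Q), as L/Q is normal) lands in R. *)
Definition totally_real (L : splittingFieldType rat) (tau : {rmorphism L -> algC})
  (F : {subfield L}) : Prop :=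
  forall (s : gal_of {:L}) x, x \in F -> tau (s x) \is Num.real.

Definition totally_imaginary (L : splittingFieldType rat) (tau : {rmorphism L -> algC})
  (F : {subfield L}) : Prop :=
  forall s : gal_of {:L}, exists2 x, x \in F & tau (s x) \isn't Num.real.

Definition is_CM_field (L : splittingFieldType rat) (tau : {rmorphism L -> algC})
  (E : {subfield L}) : Prop :=
  exists F : {subfield L},
    [/\ (F <= E)%VS, \dim E = (2 * \dim F)%N, totally_real tau F
      & totally_imaginary tau E].

Definition is_galois_closure (L : splittingFieldType rat) (E : {subfield L}) : Prop :=
  forall K : {subfield L}, galois 1%VS K -> (E <= K)%VS -> K = fullv :> {vspace L}.

(* The torsion of Z^n / Z^m M is controlled by a nonsingular r x r minor N of M,
   r the rank of M: a torsion class is determined by its coordinates in the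
   columns of N taken modulo the rows of N, so by the Smith normal form there
   are at most |det N| torsion classes.  The reflex-norm matrix has 0/1 entries,
   hence so does N, and bordering N to a +-1 matrix of size r + 1 turns
   Hadamard's inequality into 4^r (det N)^2 <= (r + 1)^(r + 1). *)

From HB Require Import structures.
From mathcomp Require Import all_boot all_order all_algebra all_fingroup all_field.
From mathcomp Require Import ring.
Set Implicit Arguments. Unset Strict Implicit. Unset Printing Implicit Defensive.
Import Order.TTheory GRing.Theory Num.Theory.
Local Open Scope ring_scope.

Section Hadamard.
Variable R : realFieldType.

Local Notation gram B := (B *m B^T).

Definition sqnorm n (v : 'rV[R]_n) : R := \sum_j v 0 j ^+ 2.

Lemma gram_row n (v : 'rV[R]_n) : gram v = (sqnorm v)%:M.
Proof.
apply/matrixP => i j; rewrite !ord1 !mxE eqxx mulr1n.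
by apply: eq_bigr => k _; rewrite mxE expr2.
Qed.

Lemma sqnorm_ge0 n (v : 'rV[R]_n) : 0 <= sqnorm v.
Proof. by rewrite sumr_ge0 // => j _; rewrite sqr_ge0. Qed.

Lemma sqnorm_eq0 n (v : 'rV[R]_n) : (sqnorm v == 0) = (v == 0).
Proof.
rewrite psumr_eq0 => [|j _]; last by rewrite sqr_ge0.
apply/allP/eqP => [v0 | -> j _]; last by rewrite /= mxE expr0n.
apply/rowP => j; rewrite mxE; apply/eqP.
by rewrite -sqrf_eq0 (implyP (v0 j (mem_index_enum j))).
Qed.

Lemma sqnormD_orth n (q w : 'rV[R]_n) :
  q *m w^T = 0 -> sqnorm (q + w) = sqnorm q + sqnorm w.
Proof.
move=> qw; have wq : w *m q^T = 0 by rewrite -[w]trmxK -trmx_mul qw trmx0.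
have := gram_row (q + w).
rewrite linearD /= mulmxDl !mulmxDr qw wq addr0 add0r !gram_row -raddfD /=.
by move/matrixP/(_ 0 0); rewrite !mxE eqxx !mulr1n.
Qed.

Lemma det_gram_col_mx_degenerate k n (a : 'rV[R]_n) (C : 'M[R]_(k, n)) :
  \det (gram C) = 0 -> \det (gram (col_mx a C)) = 0.
Proof.
move/eqP/det0P => [v v0 vCC]; apply/eqP/det0P.
have vC : v *m C = 0.
  apply/eqP; rewrite -sqnorm_eq0; apply/eqP.
  have := gram_row (v *m C); rewrite trmx_mul mulmxA -(mulmxA v) vCC mul0mx.
  by move/matrixP/(_ 0 0); rewrite !mxE eqxx mulr1n.
exists (row_mx 0 v).
  by rewrite -row_mx0; apply: contra v0 => /eqP/eq_row_mx[_ ->].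
by rewrite mulmxA mul_row_col mul0mx vC addr0 mul0mx.
Qed.

Lemma det_gram_col_mx k n (a : 'rV[R]_n) (C : 'M[R]_(k, n)) :
  gram C \in unitmx ->
  exists2 q : 'rV[R]_n, sqnorm q <= sqnorm a &
    \det (gram (col_mx a C)) = sqnorm q * \det (gram C).
Proof.
move=> uG; set c := a *m C^T *m invmx (gram C).
(* q is the component of a orthogonal to the rows of C *)
set q := a - c *m C.
have qC : q *m C^T = 0 by rewrite mulmxBl -!mulmxA mulVmx // mulmx1 subrr.
have Cq : C *m q^T = 0 by rewrite -[C]trmxK -trmx_mul qC trmx0.
exists q.
  have -> : a = q + c *m C by rewrite subrK.
  by rewrite sqnormD_orth ?lerDl ?sqnorm_ge0 // trmx_mul mulmxA qC mul0mx.
pose U : 'M[R]_(1 + k) := block_mx 1%:M (- c) 0 1%:M.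
have detU : \det U = 1 by rewrite det_ublock !det1 mulr1.
have UB : U *m col_mx a C = col_mx q C.
  by rewrite mul_block_col !mul1mx mul0mx add0r mulNmx.
have -> : \det (gram (col_mx a C)) = \det (gram (U *m col_mx a C)).
  by rewrite trmx_mul !mulmxA -(mulmxA U) !det_mulmx det_tr detU mul1r mulr1.
by rewrite UB tr_col_mx mul_col_row qC Cq det_ublock gram_row det_scalar1.
Qed.

Lemma prod_sqnorm_row_col_mx k n (a : 'rV[R]_n) (C : 'M[R]_(k, n)) :
  \prod_(i < k.+1) sqnorm (row i (col_mx a C)) =
  sqnorm a * \prod_(i < k) sqnorm (row i C).
Proof.
rewrite big_ord_recl; congr (_ * _).
  have -> : (ord0 : 'I_k.+1) = lshift k (0 : 'I_1) by apply: val_inj.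
  congr sqnorm; apply: etrans (rowKu 0 a C) _.
  by apply/rowP => j; rewrite mxE.
apply: eq_bigr => i _; have -> : lift ord0 i = rshift 1 i by apply: val_inj.
by congr sqnorm; exact: rowKd.
Qed.

Lemma gram_hadamard k n (B : 'M[R]_(k, n)) :
  0 <= \det (gram B) <= \prod_(i < k) sqnorm (row i B).
Proof.
elim: k B => [|k IH] B; first by rewrite det_mx00 big_ord0 ler01 lexx.
have -> : B = col_mx (usubmx (B : 'M_(1 + k, n))) (dsubmx (B : 'M_(1 + k, n))).
  by rewrite vsubmxK.
move: (usubmx _) (dsubmx _) => a C {B}.
rewrite prod_sqnorm_row_col_mx.
have /andP [G0 GP] := IH C.
have prod_ge0 : 0 <= \prod_(i < k) sqnorm (row i C).
  by apply: prodr_ge0 => i _; apply: sqnorm_ge0.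
have [detG0 | detGn0] := eqVneq (\det (gram C)) 0.
  by rewrite det_gram_col_mx_degenerate // lexx mulr_ge0 ?sqnorm_ge0.
have [|q qa ->] := det_gram_col_mx a (C := C); first by rewrite unitmxE unitfE.
by rewrite mulr_ge0 ?sqnorm_ge0 //= ler_pM ?sqnorm_ge0.
Qed.

Lemma hadamard n (A : 'M[R]_n) : \det A ^+ 2 <= \prod_(i < n) sqnorm (row i A).
Proof. by have /andP [_] := gram_hadamard A; rewrite det_mulmx det_tr -expr2. Qed.

End Hadamard.

Section ZeroOneDeterminant.
Variable R : realFieldType.

Lemma det_sign_mx_bound n (P : 'M[R]_n) :
  (forall i j, P i j ^+ 2 = 1) -> \det P ^+ 2 <= n%:R ^+ n.
Proof.
move=> P2; apply: le_trans (hadamard P) _.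
rewrite (eq_bigr (fun _ => n%:R)) ?prodr_const ?card_ord // => i _.
rewrite /sqnorm (eq_bigr (fun _ => 1)) ?sumr_const ?card_ord // => j _.
by rewrite mxE P2.
Qed.

(* Bordering N by a row and a column of ones and replacing N by J - 2 N turns a
   0/1 matrix of size r into a +-1 matrix of size r + 1 with determinant
   (-2)^r det N. *)
Lemma det01_mx_bound r (N : 'M[R]_r) :
  (forall i j, N i j = 0 \/ N i j = 1) ->
  4 ^+ r * \det N ^+ 2 <= (r.+1)%:R ^+ r.+1.
Proof.
move=> N01.
pose P : 'M[R]_(1 + r) :=
  block_mx 1%:M (const_mx 1) (const_mx 1) (const_mx 1 - 2%:R *: N).
have -> : 4 ^+ r * \det N ^+ 2 = \det P ^+ 2.
  have -> : P = block_mx 1%:M 0 (const_mx 1) 1%:M *m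
                block_mx 1%:M (const_mx 1) 0 (- (2%:R *: N)).
    rewrite mulmx_block !mul1mx !mul0mx !mulmx1 !addr0.
    by congr block_mx; apply/matrixP => i j; rewrite !mxE big_ord1 !mxE mulr1.
  rewrite det_mulmx det_lblock det_ublock !det1 !mul1r.
  rewrite -scaleNr detZ exprMn -exprM mulnC exprM sqrrN.
  by congr (_ ^+ _ * _); rewrite expr2 -natrM.
apply: det_sign_mx_bound => i j; rewrite mxE.
case: (split i) => i'; rewrite mxE; case: (split j) => j'; rewrite !mxE ?expr1n //.
- by rewrite (ord1 i') (ord1 j') eqxx expr1n.
- by case: (N01 i' j') => ->; [rewrite mulr0 subr0 expr1n | ring].
Qed.

End ZeroOneDeterminant.

Lemma det01_int_bound r (N : 'M[int]_r) :
  (forall i j, N i j = 0 \/ N i j = 1) ->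
  4 ^+ r * \det N ^+ 2 <= (r.+1)%:Z ^+ r.+1.
Proof.
move=> N01; rewrite -(ler_int rat) rmorphM /= !rmorphXn /= -det_map_mx.
apply: det01_mx_bound => i j; rewrite mxE.
by case: (N01 i j) => ->; [left | right].
Qed.

Lemma torsion_bound_ge r (D : int) :
  4 ^+ r * D ^+ 2 <= (r.+1)%:Z ^+ r.+1 -> `|D| <= torsion_bound r.
Proof.
move=> HD; rewrite /torsion_bound; set s := sqrtC _.
have s0 : 0 <= s by rewrite sqrtC_ge0 ler0n.
have t0 : (0 : algC) < 2 ^+ r by rewrite exprn_gt0 // ltr0n.
rewrite real_floor_ge_int; last first.
  by apply: ger0_real; rewrite mulr_ge0 ?exprn_ge0 // invr_ge0 ltW.
rewrite -(ler_pM2l t0) mulrA mulfV ?gt_eqF // mul1r.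
rewrite -ler_sqr ?nnegrE ?exprn_ge0 //; last first.
  by apply: mulr_ge0; [exact: ltW | rewrite ler0z].
rewrite -exprM mulnC exprM sqrtCK exprMn -exprM mulnC exprM.
rewrite intr_norm real_normK ?realz //.
move: HD; rewrite -(ler_int algC) rmorphM /= !rmorphXn /=.
by have -> : (2 : algC) ^+ 2 = 4%:~R by rewrite expr2 -natrM.
Qed.

Definition coker_card_le m n (M : 'M[int]_(m, n)) (N : nat) : Prop :=
  exists (T : finType) (key : 'rV[int]_n -> T),
    (#|T| <= N)%N /\ forall y1 y2, key y1 = key y2 -> in_image M (y1 - y2).

Lemma in_image_diag r (d y : 'rV[int]_r) :
  (forall i, (d ord0 i %| y ord0 i)%Z) -> in_image (diag_mx d) y.
Proof.
move=> dy; exists (\row_i (y ord0 i %/ d ord0 i)%Z).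
by apply/rowP => i; rewrite mul_mx_diag !mxE divzK.
Qed.

Lemma coker_card_le_diag r (d : 'rV[int]_r) :
  (forall i, d ord0 i != 0) -> coker_card_le (diag_mx d) (\prod_i `|d ord0 i|)%N.
Proof.
move=> d0; pose h i := `|d ord0 i|%N.
have lt_mod (y : 'rV[int]_r) i : (`|(y ord0 i %% d ord0 i)%Z|%N < h i)%N.
  by rewrite -ltz_nat !abszE ger0_norm ?modz_ge0 ?ltz_mod.
exists {dffun forall i : 'I_r, 'I_(h i)}.
exists (fun y => [ffun i => Ordinal (lt_mod y i)]).
split.
  rewrite card_dep_ffun foldrE big_map big_enum /=.
  by under eq_bigr do rewrite card_ord.
move=> y1 y2 /ffunP key12; apply: in_image_diag => i.
have /(congr1 (fun j : 'I_(h i) => Posz j)) := key12 i; rewrite !ffunE /=.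
rewrite !abszE !ger0_norm ?modz_ge0 // => /eqP.
by rewrite !mxE eqz_mod_dvd.
Qed.

Lemma coker_card_le_unimodular m n (L : 'M[int]_m) (D : 'M[int]_(m, n)) R N :
  L \in unitmx -> R \in unitmx -> coker_card_le D N -> coker_card_le (L *m D *m R) N.
Proof.
move=> uL uR [T [key [cardT keyD]]]; exists T, (fun y => key (y *m invmx R)).
split=> // y1 y2 /keyD[u]; rewrite -mulmxBl => Eu.
exists (u *m invmx L); rewrite -(mulmxKV uR (y1 - y2)) Eu.
by rewrite !mulmxA mulmxKV.
Qed.

Lemma unitmx_int_abs_det n (L : 'M[int]_n) : L \in unitmx -> `|\det L|%N = 1%N.
Proof.
move=> uL; have := congr1 determinant (mulmxV uL).
rewrite det_mulmx det1 => /(congr1 absz); rewrite abszM /= => /eqP.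
by rewrite muln_eq1 => /andP [/eqP].
Qed.

Lemma coker_card_le_det r (N : 'M[int]_r) :
  \det N != 0 -> coker_card_le N `|\det N|.
Proof.
have [L uL [R uR [d _ ->]]] := int_Smith_normal_form N.
set D := \matrix_(i, j) _; have -> : D = diag_mx (\row_i d`_i).
  by apply/matrixP => i j; rewrite !mxE.
rewrite !det_mulmx det_diag !abszM !unitmx_int_abs_det // mul1n muln1 => detN.
rewrite (big_morph absz abszM (erefl : `|1%R|%N = 1%N)).
apply: coker_card_le_unimodular => //; apply: coker_card_le_diag => i.
by apply: contra detN => /eqP di0; rewrite (bigD1 i) //= di0 mul0r mulr0 mul0r.
Qed.

Lemma size_le_coker_card m n (M : 'M[int]_(m, n)) N (ys : seq 'rV[int]_n) :
  coker_card_le M N ->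
  (forall i j, (i < j < size ys)%N -> ~ in_image M (nth 0 ys i - nth 0 ys j)) ->
  (size ys <= N)%N.
Proof.
move=> [T [key [cardT keyM]]] distinct; apply: leq_trans cardT.
have : uniq (map key ys).
  apply/(uniqP (key 0)) => i j; rewrite !inE size_map => ilt jlt.
  rewrite !(nth_map 0) // => /keyM ij; apply/eqP; apply: contraT => nij.
  case: (ltngtP i j) nij => [lt_ij _|lt_ji _|//].
    by case: (distinct i j); rewrite ?lt_ij.
  case: (distinct j i); rewrite ?lt_ji //; case: ij => u ij.
  by exists (- u); rewrite mulNmx -ij opprB.
by move/card_uniqP; rewrite size_map => <-; apply: max_card.
Qed.

Lemma exists_full_minor (F : fieldType) m n (A : 'M[F]_(m, n)) :
  exists (f : 'I_(\rank A) -> 'I_m) (g : 'I_(\rank A) -> 'I_n),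
    (rowsub f A :=: A)%MS /\ mxsub f g A \in unitmx.
Proof.
pose f := maxrankfun A.
have rfAT : row_full (rowsub f A)^T.
  by rewrite /row_full mxrank_tr (eq_maxrowsub A).
exists f, (fullrankfun rfAT); split; first exact: eq_maxrowsub.
rewrite -unitmx_tr; have := fullrowsub_unit rfAT.
by congr (_ \in unitmx); apply/matrixP => i j; rewrite !mxE.
Qed.

Lemma submx_colsub_eq0 (F : fieldType) r n (A : 'M[F]_(r, n)) (g : 'I_r -> 'I_n)
    (x : 'rV[F]_n) :
  colsub g A \in unitmx -> (x <= A)%MS -> colsub g x = 0 -> x = 0.
Proof.
move=> uA /submxP[t ->]; rewrite -mulmx_colsub => tA0.
have -> : t = 0 by rewrite -[t](mulmxK uA) tA0 mul0mx.
by rewrite mul0mx.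
Qed.

Local Notation ratmx M := (map_mx (fun z : int => z%:~R : rat) M).

Lemma ratmx_eq0 m n (M : 'M[int]_(m, n)) : ratmx M = 0 -> M = 0.
Proof.
move/matrixP => M0; apply/matrixP => i j.
by have /eqP := M0 i j; rewrite !mxE intr_eq0 => /eqP.
Qed.

Lemma colsubB m n n' (g : 'I_n' -> 'I_n) (x y : 'M[int]_(m, n)) :
  colsub g (x - y) = colsub g x - colsub g y.
Proof. by apply/matrixP => i j; rewrite !mxE. Qed.

Lemma coker_torsion_sub m n (M : 'M[int]_(m, n)) x y :
  coker_torsion M x -> coker_torsion M y -> coker_torsion M (x - y).
Proof.
move=> [k1 [k1p [a Ha]]] [k2 [k2p [b Hb]]].
exists (k1 * k2)%N; split; first by rewrite muln_gt0 k1p.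
exists (k2%:Z *: a - k1%:Z *: b).
by rewrite mulmxBl -!scalemxAl -Ha -Hb !scalerA PoszM scalerBr mulrC.
Qed.

(* A torsion class is determined by its columns in a nonsingular maximal minor:
   if those columns vanish, a multiple of the class lies in the rational row
   space of the minor's rows, and the minor's columns then force it to be 0. *)
Lemma in_image_minor m n r (M : 'M[int]_(m, n)) (f : 'I_r -> 'I_m)
    (g : 'I_r -> 'I_n) (z : 'rV[int]_n) :
  (rowsub f (ratmx M) :=: ratmx M)%MS -> mxsub f g (ratmx M) \in unitmx ->
  coker_torsion M z -> in_image (mxsub f g M) (colsub g z) -> in_image M z.
Proof.
move=> eqM uN [k [k0 [w Hw]]] [u Hu].
set v := u *m rowsub f 1%:M; exists v; apply/eqP; rewrite -subr_eq0; apply/eqP.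
have kz : k%:Z *: (z - v *m M) = (w - k%:Z *: v) *m M.
  by rewrite scalerBr Hw mulmxBl scalemxAl.
have cz : colsub g (z - v *m M) = 0.
  rewrite colsubB Hu -mulmxA -rowsubE -mulmx_colsub.
  have -> : colsub g (rowsub f M) = mxsub f g M.
    by apply/matrixP => i j; rewrite !mxE.
  by rewrite subrr.
apply: ratmx_eq0; have := congr1 (fun x => ratmx x) kz.
rewrite map_mxZ map_mxM /= => kzQ.
suff : (k%:~R : rat) *: ratmx (z - v *m M) = 0.
  by move/eqP; rewrite scalemx_eq0 intr_eq0 eqz_nat eqn0Ngt k0 => /eqP.
apply: (submx_colsub_eq0 (A := rowsub f (ratmx M)) (g := g)).
- by congr (_ \in unitmx): uN; apply/matrixP => i j; rewrite !mxE.
- by rewrite eqM kzQ submxMl.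
- apply/matrixP => i j; have := congr1 (fun x : 'rV[int]_r => x i j) cz.
  by rewrite !mxE => ->; rewrite mulr0.
Qed.

Lemma coker_torsion_order_le_minor m n r (M : 'M[int]_(m, n)) (f : 'I_r -> 'I_m)
    (g : 'I_r -> 'I_n) :
  (rowsub f (ratmx M) :=: ratmx M)%MS -> mxsub f g (ratmx M) \in unitmx ->
  coker_torsion_order_le M `|\det (mxsub f g M)|.
Proof.
move=> eqM uN xs xs_tors xs_distinct; rewrite -abszE lez_nat.
have detN : \det (mxsub f g M) != 0.
  by move: uN; rewrite -map_mxsub unitmxE unitfE det_map_mx intr_eq0.
rewrite -(size_map (colsub g)).
apply: size_le_coker_card (coker_card_le_det detN) _.
rewrite size_map => i j /andP [lt_ij lt_j] Nij; apply: (xs_distinct i j).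
  by rewrite lt_ij lt_j.
apply: in_image_minor eqM uN _ _.
  by apply: coker_torsion_sub; apply/xs_tors/mem_nth; rewrite ?(ltn_trans lt_ij).
by rewrite colsubB -!(nth_map 0 0 (colsub g)) // (ltn_trans lt_ij).
Qed.

Lemma coker_torsion_order_le01 m n (M : 'M[int]_(m, n)) :
  (forall i j, M i j = 0 \/ M i j = 1) ->
  coker_torsion_order_le M (torsion_bound (int_rank M)).
Proof.
move=> M01; have [f [g [eqM uN]]] := exists_full_minor (ratmx M).
move=> xs xs_tors xs_distinct; apply: le_trans (torsion_bound_ge _).
  exact: coker_torsion_order_le_minor eqM uN xs xs_tors xs_distinct.
by apply: det01_int_bound => i j; rewrite mxE; apply: M01.
Qed.

Unset Implicit Arguments.

Theorem proposition2p15
  (L : splittingFieldType rat) (tau : {rmorphism L -> algC})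
  (E : {subfield L})
  (iota : gal_of {:L}) (S : {set {set gal_of {:L}}}) :
  is_galois_closure E ->
  is_CM_field tau E ->
  (forall x : L, tau (iota x) = (tau x)^*) ->
  is_CM_type ('Gal({:L} / 1%VS))%g ('Gal({:L} / E))%g iota S ->
  primitive_CM_type ('Gal({:L} / 1%VS))%g ('Gal({:L} / E))%g S ->
  forall r : nat,
    int_rank (reflex_norm_mx ('Gal({:L} / 1%VS))%g ('Gal({:L} / E))%g S) = r ->
    coker_torsion_order_le (reflex_norm_mx ('Gal({:L} / 1%VS))%g ('Gal({:L} / E))%g S)
      (torsion_bound r).
Proof.
move=> _ _ _ _ _ r <-; apply: coker_torsion_order_le01 => i j.
by rewrite mxE; case: (_ \in _); [right | left].
Qed.
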